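(* Let $G=(Q\cup S,E)$ be a split graph, where $Q$ is a clique, $S$ is a stable set, $Q\cap S=\emptyset$, and $Q$ is a maximal clique of $G$ (not contained in any larger clique). Let $T\subseteq Q$ be a non-empty set such that the degrees in $G$ of the vertices of $T$ are pairwise different. Then $\eta(G)\leq |Q|-|T|+1$.
   Context: All graphs are finite, simple and undirected. A graph is split if its vertex set can be partitioned into a clique and a stable set. For a vertex $v$, $N(v)$ is its set of neighbours and $d(v)=|N(v)|$ its degree. For a positive integer $k$, $[k]=\{1,\dots,k\}$. For a labeling $f:V(G)\to[k]$ and $S'\subseteq V(G)$, $f(S')=\sum_{u\in S'}f(u)$. A labeling $f:V(G)\to[k]$ is an additive $k$-coloring if $f(N(u))\neq f(N(v))$ for every edge $(u,v)$ of $G$. The additive chromatic number $\eta(G)$ is the least $k$ for which $G$ has an additive $k$-coloring. *)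

From mathcomp Require Import all_boot all_order.
Set Implicit Arguments. Unset Strict Implicit. Unset Printing Implicit Defensive.

(* A finite simple graph on a finType V is given by an adjacency relation
   e : rel V, assumed symmetric and irreflexive in the theorem. *)
Section Graphs.
Variables (V : finType) (e : rel V).

Definition nbhd (v : V) : {set V} := [set u | e v u].
Definition deg (v : V) : nat := #|nbhd v|.

Definition is_clique (C : {set V}) : Prop :=
  {in C &, forall u v, u != v -> e u v}.
Definition is_stable (S : {set V}) : Prop :=
  {in S &, forall u v, ~~ e u v}.
Definition is_maximal_clique (Q : {set V}) : Prop :=
  is_clique Q /\ forall C : {set V}, is_clique C -> Q \subset C -> C = Q.

Definition lsum (f : V -> nat) (A : {set V}) : nat := \sum_(u in A) f u.

Definition additive_coloring (k : nat) (f : V -> nat) : Prop :=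
  (forall v, 1 <= f v <= k) /\
  (forall u v, e u v -> lsum f (nbhd u) <> lsum f (nbhd v)).

Definition has_additive (k : nat) : bool :=
  [exists g : {ffun V -> 'I_k},
    [forall u, forall v, e u v ==>
      (\sum_(w in nbhd u) (g w).+1 != \sum_(w in nbhd v) (g w).+1)]].

(* eta(G): least k >= 1 admitting an additive k-coloring.  Such a k always
   exists below 2^#|V| + 1 (labels 2^i), so the bounded minimum is exact. *)
Definition eta : nat :=
  \big[minn/(2 ^ #|V|).+1]_(1 <= k < (2 ^ #|V|).+1 | has_additive k) k.
End Graphs.

From mathcomp Require Import all_boot all_order.
From mathcomp Require Import zify.

Set Implicit Arguments.
Unset Strict Implicit.
Unset Printing Implicit Defensive.
Import Order.TTheory.

(* Put k := |Q| - |T| + 1.  Each class of equal-degree vertices of Q contains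
   at most one vertex of T, hence at most k vertices, so they can receive
   pairwise distinct labels in [1, k]; every vertex outside Q gets the label k.
   With F := f(Q) and a(u) := |N(u) \ Q|, a vertex u of Q has
   f(N(u)) = F + k a(u) - f(u), a value in [F + k (a(u) - 1), F + k a(u) - 1],
   while by maximality of Q every v outside Q misses a vertex of Q, so
   f(N(v)) < F.  Thus the sums of adjacent vertices can only agree for two
   vertices of Q with the same a, i.e. the same degree, and those carry
   distinct labels. *)

Section Eta.
Variables (V : finType) (e : rel V).

Lemma additive_coloring_has_additive k f :
  additive_coloring e k f -> has_additive e k.
Proof.
move=> [f_range f_sep]; apply/existsP.
have lt_k v : (f v).-1 < k by have := f_range v; lia.
pose g := [ffun v => Ordinal (lt_k v)].
have gE w : (g w : nat).+1 = f w by rewrite ffunE /=; have := f_range w; lia.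
exists g; apply/forallP => u; apply/forallP => v; apply/implyP => euv.
rewrite (eq_bigr _ (fun w _ => gE w)) (eq_bigr _ (fun w _ => gE w)).
exact/eqP/f_sep.
Qed.

Lemma eta_le_additive k f :
  0 < k <= 2 ^ #|V| -> additive_coloring e k f -> eta e <= k.
Proof.
move=> k_range /additive_coloring_has_additive k_add.
rewrite /eta -minEnat.
apply: (@ge_bigmin_seq _ nat _ (index_iota _ _) _ k _ id) => //.
by rewrite mem_index_iota; lia.
Qed.

End Eta.

Section FiberRank.
Variables (T : finType) (K : eqType) (key : T -> K) (A : {set T}).

Definition fiber x := [set y in A | key y == key x].

Definition fiber_rank x := #|[set y in fiber x | enum_rank y < enum_rank x]|.

Lemma fiber_rank_lt x : x \in A -> fiber_rank x < #|fiber x|.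
Proof.
move=> xA; apply/proper_card/properP; split.
  by apply/subsetP => y; rewrite inE => /andP[].
by exists x; rewrite !inE ?xA ?eqxx ?ltnn.
Qed.

Lemma fiber_rank_mono x y : x \in A -> key x = key y ->
  enum_rank x < enum_rank y -> fiber_rank x < fiber_rank y.
Proof.
move=> xA kxy lt_xy; rewrite /fiber_rank.
have -> : fiber x = fiber y by apply/setP => z; rewrite !inE kxy.
apply/proper_card/properP; split.
  apply/subsetP => z; rewrite !inE => /andP[-> lt_zx]; exact: ltn_trans lt_xy.
by exists x; rewrite !inE ?xA ?kxy ?eqxx ?lt_xy ?ltnn.
Qed.

Lemma fiber_rank_inj :
  {in A &, forall x y, key x = key y -> fiber_rank x = fiber_rank y -> x = y}.
Proof.
move=> x y xA yA kxy.
case: (ltngtP (enum_rank x) (enum_rank y)) => [lt_xy|lt_yx|eq_xy].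
- by move: (fiber_rank_mono xA kxy lt_xy); lia.
- by move: (fiber_rank_mono yA (esym kxy) lt_yx); lia.
- by move=> _; apply/enum_rank_inj/val_inj.
Qed.

Lemma card_fiber_le (B : {set T}) x : B \subset A -> {in B &, injective key} ->
  #|fiber x| <= #|A| - #|B| + 1.
Proof.
move=> BA key_inj.
have fiberB : #|fiber x :&: B| <= 1.
  apply/card_le1_eqP => y z /setIP[+ yB] /setIP[+ zB].
  rewrite !inE => /andP[_ /eqP ky] /andP[_ /eqP kz].
  by apply: key_inj; rewrite // ky kz.
have fiberA : #|fiber x :\: B| <= #|A :\: B|.
  by apply/subset_leq_card/setSD/subsetP => y; rewrite /fiber inE => /andP[].
move: fiberA; rewrite -(cardsID B (fiber x)) [#|A :\: B|]cardsD (setIidPr BA).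
lia.
Qed.

End FiberRank.

Section SplitColoring.
Variables (V : finType) (e : rel V).
Hypotheses (e_sym : symmetric e) (e_irr : irreflexive e).
Variable Q : {set V}.
Hypotheses (Q_maxclique : is_maximal_clique e Q)
  (QC_stable : is_stable e (~: Q)).

Lemma nonadj_outside_clique x y : x \notin Q -> y \notin Q -> ~~ e x y.
Proof. by move=> xQ yQ; apply: QC_stable; rewrite inE. Qed.

Lemma nbhd_setI_clique u : u \in Q -> nbhd e u :&: Q = Q :\ u.
Proof.
move=> uQ; apply/setP => w; rewrite !inE.
case: (eqVneq w u) => [->|wu] /=; first by rewrite e_irr.
by case wQ: (w \in Q); rewrite ?andbF // andbT Q_maxclique.1 // eq_sym.
Qed.

Lemma deg_clique u : u \in Q -> (deg e u).+1 = #|Q| + #|nbhd e u :\: Q|.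
Proof.
move=> uQ; rewrite /deg -(cardsID Q (nbhd e u)) nbhd_setI_clique //.
by rewrite [#|Q|](cardsD1 u Q) uQ; lia.
Qed.

Lemma nbhd_outside_clique v : v \notin Q ->
  exists2 w, w \in Q & nbhd e v \subset Q :\ w.
Proof.
move=> vQ.
have nbhdQ : nbhd e v \subset Q.
  apply/subsetP => w; rewrite inE => evw; apply: contraT => wQ.
  by move: (nonadj_outside_clique vQ wQ); rewrite evw.
have [w wQ evw] : exists2 w, w \in Q & ~~ e v w.
  apply/exists_inP; apply: contraT; rewrite negb_exists_in => /forall_inP adj.
  suff vQ' : v |: Q = Q by rewrite -vQ' setU11 in vQ.
  apply: Q_maxclique.2 (subsetUr _ _) => x y; rewrite !inE.
  move=> /orP[/eqP->|xQ] /orP[/eqP->|yQ] xy; first by rewrite eqxx in xy.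
  - exact/negPn/adj.
  - by rewrite e_sym; apply/negPn/adj.
  - exact: Q_maxclique.1.
exists w => //; apply/subsetP => x xv; rewrite !inE (subsetP nbhdQ) // andbT.
by apply: contraNneq evw => xw; rewrite -xw -inE.
Qed.

Variables (k : nat) (f : V -> nat).
Hypotheses (f_range : forall v, 0 < f v <= k)
  (f_out : {in ~: Q, forall v, f v = k})
  (f_deg : {in Q &, forall u v, deg e u = deg e v -> f u = f v -> u = v}).

Lemma lsum_nbhd_clique u : u \in Q ->
  lsum f (nbhd e u) + f u = lsum f Q + #|nbhd e u :\: Q| * k.
Proof.
move=> uQ.
have out_k : \sum_(w in nbhd e u :\: Q) f w = #|nbhd e u :\: Q| * k.
  rewrite -sum_nat_const; apply: eq_bigr => w; rewrite inE => /andP[wQ _].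
  by apply: f_out; rewrite inE.
rewrite /lsum (big_setID Q) /= nbhd_setI_clique // out_k (big_setD1 u uQ) /=.
lia.
Qed.

Lemma lsum_nbhd_outside v : v \notin Q -> lsum f (nbhd e v) < lsum f Q.
Proof.
case/nbhd_outside_clique => w wQ sub.
rewrite /lsum (big_setD1 w wQ) /=.
rewrite [\sum_(i in Q :\ w) _](big_setID (nbhd e v)) /=.
by rewrite (setIidPr sub); have := f_range w; lia.
Qed.

Lemma lsum_nbhd_lt_cross u v : u \in Q -> v \notin Q -> e u v ->
  lsum f (nbhd e v) < lsum f (nbhd e u).
Proof.
move=> uQ vQ euv.
have out_gt0 : 0 < #|nbhd e u :\: Q|.
  by apply/card_gt0P; exists v; rewrite !inE euv vQ.
have := lsum_nbhd_clique uQ; have := lsum_nbhd_outside vQ; have := f_range u.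
nia.
Qed.

Lemma lsum_nbhd_inj_clique u v : u \in Q -> v \in Q ->
  lsum f (nbhd e u) = lsum f (nbhd e v) -> u = v.
Proof.
move=> uQ vQ eq_sum.
have su := lsum_nbhd_clique uQ; have sv := lsum_nbhd_clique vQ.
have fu := f_range u; have fv := f_range v.
have deg_u := deg_clique uQ; have deg_v := deg_clique vQ.
case: (ltngtP #|nbhd e u :\: Q| #|nbhd e v :\: Q|) => cmp; try nia.
by apply: (f_deg uQ vQ); lia.
Qed.

Lemma split_additive_coloring : additive_coloring e k f.
Proof.
split=> // u v euv eq_sum.
case uQ: (u \in Q); case vQ: (v \in Q).
- by move: euv; rewrite (lsum_nbhd_inj_clique uQ vQ eq_sum) e_irr.
- by move: (lsum_nbhd_lt_cross uQ (negbT vQ) euv); lia.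
- by rewrite e_sym in euv; move: (lsum_nbhd_lt_cross vQ (negbT uQ) euv); lia.
- by move: (nonadj_outside_clique (negbT uQ) (negbT vQ)); rewrite euv.
Qed.

End SplitColoring.

Theorem mainTheorem9 (V : finType) (e : rel V)
  (e_sym : symmetric e) (e_irr : irreflexive e)
  (Q S T : {set V})
  (QS_cover : Q :|: S = [set: V]) (QS_disj : Q :&: S = set0)
  (Q_maxclique : is_maximal_clique e Q) (S_stable : is_stable e S)
  (T_sub : T \subset Q) (T_ne : T != set0)
  (T_deg : {in T &, injective (deg e)}) :
  eta e <= #|Q| - #|T| + 1.
Proof.
have S_eq : S = ~: Q.
  apply/setP => v; move/setP/(_ v): QS_cover; move/setP/(_ v): QS_disj.
  by rewrite !inE; case: (v \in Q); case: (v \in S).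
pose k := #|Q| - #|T| + 1.
pose f v := if v \in Q then (fiber_rank (deg e) Q v).+1 else k.
have T_gt0 : 0 < #|T| by rewrite card_gt0.
apply: (@eta_le_additive _ _ _ f).
  by have := max_card Q; have := ltn_expl #|V| (ltnSn 1); lia.
rewrite S_eq in S_stable.
apply: (split_additive_coloring e_sym e_irr Q_maxclique S_stable).
- move=> v; rewrite /f; case: ifP => vQ; last lia.
  have := fiber_rank_lt (deg e) vQ; have := card_fiber_le v T_sub T_deg.
  lia.
- by move=> v; rewrite in_setC /f => /negbTE ->.
- by move=> u v uQ vQ deg_uv; rewrite /f uQ vQ => -[]; apply: fiber_rank_inj.
Qed.
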